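(* Let $\mathbb{P}_3=\mathbb{Z}^{6}\oplus\mathbb{F}_2^{11}$, whose elements are written $\overline{\alpha}=(\alpha_1,\dots,\alpha_6;\ \alpha^1_{12},\alpha^1_{13},\alpha^1_{23};\ \alpha^2_{12},\alpha^2_{13},\alpha^2_{23};\ \alpha^3_{12},\alpha^3_{13},\alpha^3_{23};\ \alpha^1_{123},\alpha^2_{123})$ with $\alpha_1,\dots,\alpha_6\in\mathbb{Z}$ and the remaining eleven coordinates in $\mathbb{F}_2=\{0,1\}$. Define a product $\overline{\alpha}\cdot\overline{\beta}=\overline{\gamma}$ by $\gamma_l=\alpha_l+\beta_l$ for $l=1,\dots,6$, and, computing modulo $2$ (integers being reduced mod 2): $\gamma^1_{ij}=\alpha^1_{ij}+\beta^1_{ij}+\alpha_j\beta_i$, $\gamma^2_{ij}=\alpha^2_{ij}+\beta^2_{ij}+\alpha_{j+3}\beta_{i+3}$, $\gamma^3_{ij}=\alpha^3_{ij}+\beta^3_{ij}+\alpha_{i+3}\beta_j+\alpha_{j+3}\beta_i$ for $1\le i<j\le 3$; $\gamma^1_{123}=\alpha^1_{123}+\beta^1_{123}+\alpha^3_{12}\beta_3+\alpha^3_{13}\beta_2+\alpha^3_{23}\beta_1+\alpha_4\beta_2\beta_3+\alpha_5\beta_1\beta_3+\alpha_6\beta_1\beta_2$; $\gamma^2_{123}=\alpha^2_{123}+\beta^2_{123}+\alpha^3_{12}\beta_6+\alpha^3_{13}\beta_5+\alpha^3_{23}\beta_4+\alpha_4\alpha_5\beta_3+\alpha_4\alpha_6\beta_2+\alpha_5\alpha_6\beta_1+\alpha_4(\beta_2\beta_6+\beta_5\beta_3)+\alpha_5(\beta_1\beta_6+\beta_4\beta_3)+\alpha_6(\beta_1\beta_5+\beta_4\beta_2)$.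 Then $\mathbb{P}_3$ with this product is a group. *)

From HB Require Import structures.
From mathcomp Require Import all_boot all_order all_algebra.
Set Implicit Arguments. Unset Strict Implicit. Unset Printing Implicit Defensive.
Import Order.TTheory GRing.Theory Num.Theory.
Local Open Scope ring_scope.

Record P3 := mkP3 {
  a1 : int; a2 : int; a3 : int; a4 : int; a5 : int; a6 : int;
  x1_12 : 'F_2; x1_13 : 'F_2; x1_23 : 'F_2;
  x2_12 : 'F_2; x2_13 : 'F_2; x2_23 : 'F_2;
  x3_12 : 'F_2; x3_13 : 'F_2; x3_23 : 'F_2;
  x1_123 : 'F_2; x2_123 : 'F_2 }.

Definition r2 (z : int) : 'F_2 := z%:~R.

Definition P3mul (A B : P3) : P3 :=
  let a_1 := r2 (a1 A) in let a_2 := r2 (a2 A) in let a_3 := r2 (a3 A) in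
  let a_4 := r2 (a4 A) in let a_5 := r2 (a5 A) in let a_6 := r2 (a6 A) in
  let b_1 := r2 (a1 B) in let b_2 := r2 (a2 B) in let b_3 := r2 (a3 B) in
  let b_4 := r2 (a4 B) in let b_5 := r2 (a5 B) in let b_6 := r2 (a6 B) in
  mkP3
    (a1 A + a1 B) (a2 A + a2 B) (a3 A + a3 B)
    (a4 A + a4 B) (a5 A + a5 B) (a6 A + a6 B)
    (x1_12 A + x1_12 B + a_2 * b_1)
    (x1_13 A + x1_13 B + a_3 * b_1)
    (x1_23 A + x1_23 B + a_3 * b_2)
    (x2_12 A + x2_12 B + a_5 * b_4)
    (x2_13 A + x2_13 B + a_6 * b_4)
    (x2_23 A + x2_23 B + a_6 * b_5)
    (x3_12 A + x3_12 B + a_4 * b_2 + a_5 * b_1)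
    (x3_13 A + x3_13 B + a_4 * b_3 + a_6 * b_1)
    (x3_23 A + x3_23 B + a_5 * b_3 + a_6 * b_2)
    (x1_123 A + x1_123 B + x3_12 A * b_3 + x3_13 A * b_2 + x3_23 A * b_1
       + a_4 * b_2 * b_3 + a_5 * b_1 * b_3 + a_6 * b_1 * b_2)
    (x2_123 A + x2_123 B + x3_12 A * b_6 + x3_13 A * b_5 + x3_23 A * b_4
       + a_4 * a_5 * b_3 + a_4 * a_6 * b_2 + a_5 * a_6 * b_1
       + a_4 * (b_2 * b_6 + b_5 * b_3) + a_5 * (b_1 * b_6 + b_4 * b_3)
       + a_6 * (b_1 * b_5 + b_4 * b_2)).

Definition is_group_op (T : Type) (mul : T -> T -> T) : Prop :=
  (forall x y z, mul x (mul y z) = mul (mul x y) z) /\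
  exists e : T, (forall x, mul e x = x /\ mul x e = x) /\
                (forall x, exists y, mul x y = e /\ mul y x = e).

From mathcomp Require Import all_boot all_order all_algebra.
From mathcomp Require Import ring.
Set Implicit Arguments. Unset Strict Implicit.
Import GRing.Theory.
Local Open Scope ring_scope.

(* Associativity of P3mul is a polynomial identity over F_2 in the coordinates,
   once the integer coordinates are reduced mod 2 (reduction is additive). The
   zero element is a right identity, and an explicit right inverse exists; in
   any associative structure, right identity and right inverses suffice. *)

Section RightGroupAxioms.

Variables (T : Type) (mul : T -> T -> T) (e : T) (inv : T -> T).
Hypothesis mulA : forall x y z, mul x (mul y z) = mul (mul x y) z.
Hypothesis mulx1 : forall x, mul x e = x.
Hypothesis mulxV : forall x, mul x (inv x) = e.

Lemma idempotent_eq_unit u : mul u u = u -> u = e.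
Proof. by move=> uu; rewrite -[u]mulx1 -(mulxV u) mulA uu. Qed.

Lemma mulVx x : mul (inv x) x = e.
Proof.
apply: idempotent_eq_unit.
by rewrite mulA -(mulA (inv x) x) mulxV mulx1.
Qed.

Lemma mul1x x : mul e x = x.
Proof. by rewrite -(mulxV x) -mulA mulVx mulx1. Qed.

Lemma is_group_op_of_right_axioms : is_group_op mul.
Proof.
split=> //; exists e; split=> x; first by rewrite mul1x mulx1.
by exists (inv x); rewrite mulxV mulVx.
Qed.

End RightGroupAxioms.

Lemma F2_natr_double k : (k.*2%:R : 'F_2) = 0.
Proof. by rewrite -mul2n natrM (pchar_Fp_0 (isT : prime 2)) mul0r. Qed.

Lemma r2D a b : r2 (a + b) = r2 a + r2 b.
Proof. exact: intrD. Qed.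

Lemma r2N a : r2 (- a) = r2 a.
Proof. by rewrite /r2 intrN (oppr_pchar2 (pchar_Fp (isT : prime 2))). Qed.

Definition P3one := mkP3 0 0 0 0 0 0 0 0 0 0 0 0 0 0 0 0 0.

(* The correction terms of [A * B] depend on [B] only through its integer
   coordinates mod 2, and [-a = a] mod 2: so [A * A^-1] has the correction
   terms of [A * A], which are the F_2 coordinates of [A * A]. *)
Definition P3inv (A : P3) : P3 :=
  let S := P3mul A A in
  mkP3 (- a1 A) (- a2 A) (- a3 A) (- a4 A) (- a5 A) (- a6 A)
    (x1_12 A + x1_12 S) (x1_13 A + x1_13 S) (x1_23 A + x1_23 S)
    (x2_12 A + x2_12 S) (x2_13 A + x2_13 S) (x2_23 A + x2_23 S)
    (x3_12 A + x3_12 S) (x3_13 A + x3_13 S) (x3_23 A + x3_23 S)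
    (x1_123 A + x1_123 S) (x2_123 A + x2_123 S).

Lemma P3mulA x y z : P3mul x (P3mul y z) = P3mul (P3mul x y) z.
Proof.
case: x => ? ? ? ? ? ? ? ? ? ? ? ? ? ? ? ? ?.
case: y => ? ? ? ? ? ? ? ? ? ? ? ? ? ? ? ? ?.
case: z => ? ? ? ? ? ? ? ? ? ? ? ? ? ? ? ? ?.
have F2_2 : (2 : 'F_2) = 0 := F2_natr_double 1.
rewrite /P3mul /= !r2D; congr mkP3; first [ring | ring: F2_2].
Qed.

Lemma P3mulx1 x : P3mul x P3one = x.
Proof.
case: x => ? ? ? ? ? ? ? ? ? ? ? ? ? ? ? ? ?.
rewrite /P3mul /= /r2 !mulr0z; congr mkP3; ring.
Qed.

Lemma P3mulxV x : P3mul x (P3inv x) = P3one.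
Proof.
(* [ring] only rewrites with these on the coefficients of its normal form, so
   each even coefficient that occurs must be supplied. *)
have F2_2 : (2 : 'F_2) = 0 := F2_natr_double 1.
have F2_4 : (4 : 'F_2) = 0 := F2_natr_double 2.
have F2_6 : (6 : 'F_2) = 0 := F2_natr_double 3.
case: x => ? ? ? ? ? ? ? ? ? ? ? ? ? ? ? ? ?.
rewrite /P3mul /P3inv /= !r2N; congr mkP3; first [ring | ring: F2_2 F2_4 F2_6].
Qed.

Theorem lemma2p4 : is_group_op P3mul.
Proof. exact: (is_group_op_of_right_axioms P3mulA P3mulx1 P3mulxV). Qed.
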